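(* A pair of matrices $(G,H)\in W_n$ belongs to $\Psi(\mathbb{S}^n)$ if and only if $G$ is positive definite. A butterfly in $\mathbb{S}^n$ is determined by a pair $(G,H)\in\Psi(\mathbb{S}^n)$ uniquely up to isometry, and up to replacing some of its vertices with their antipodes.
   Context: $\mathbb{S}^n$ is the unit sphere in $\mathbb{E}^{n+1}$; tangent vectors are regarded as vectors of $\mathbb{E}^{n+1}$. $W_n$ is the space of pairs $(G,H)$ of real $n\times n$ matrices with $G$ symmetric and $g_{pp}=h_{pp}=1$ for all $p$. A butterfly in $\mathbb{S}^n$ consists of non-degenerate $(n-1)$-simplices $\Delta=[\mathbf{a}_1\dots\mathbf{a}_n]$ and $\Delta_p$ (spanned by $\mathbf{b}_p$ and $\mathbf{a}_q$, $q\ne p$), $p=1,\dots,n$, where $\Delta_p$ is attached to $\Delta$ along the face $F_p$ of $\Delta$ opposite $\mathbf{a}_p$. Let $\mathbf{m}$ be a unit normal to $\Delta$, $\mathbf{n}_p$ the unit tangent vector to $\Delta$ orthogonal to $F_p$ pointing into $\Delta$, $\alpha_p$ the sine of the length of the altitude of $\Delta$ from $\mathbf{a}_p$, $\beta_p$ the sine of the length of the altitude of $\Delta_p$ from $\mathbf{b}_p$, and $\mathbf{b}_p^0$ the position of $\mathbf{b}_p$ after rotating $\Delta_p$ about $F_p$ into the great sphere of $\Delta$ on the same side of $F_p$ as $\mathbf{a}_p$. The pair $(G,H)$ of the butterfly: $G$ is the Gram matrix of $\mathbf{n}_1,\dots,\mathbf{n}_n$ and $h_{pq}=\beta_p^{-1}(\mathbf{b}_p^0,\mathbf{n}_q)$.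 Elementary reversions act on $(G,H)$ as follows: the $a_p$-reversion (formally $\alpha_p\mapsto-\alpha_p$, $\mathbf{n}_p\mapsto-\mathbf{n}_p$, $\mathbf{m}\mapsto-\mathbf{m}$) replaces, for all $q\ne p$, $g_{pq}=g_{qp}$ by $-g_{pq}$, $h_{pq}$ by $h_{pq}-2g_{pq}$, $h_{qp}$ by $-h_{qp}$; the $b_p$-reversion (formally $\beta_p\mapsto-\beta_p$) replaces $h_{pq}$ by $2g_{pq}-h_{pq}$ for all $q\ne p$; all other entries are unchanged. $\Psi(\mathbb{S}^n)\subset W_n$ is the set of all pairs obtained by compositions of elementary reversions from pairs of butterflies in $\mathbb{S}^n$. *)

From mathcomp Require Import all_boot all_order all_algebra reals.
Set Implicit Arguments. Unset Strict Implicit. Unset Printing Implicit Defensive.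
Import Order.TTheory GRing.Theory Num.Theory.
Local Open Scope ring_scope.

Section Butterflies.
Variable R : realType.
Variable n : nat.

(* Points / vectors of E^{n+1} are row vectors of size n.+1. *)
Notation vec := 'rV[R]_(n.+1).

Definition dotv (u v : vec) : R := (u *m v^T) 0 0.

Definition on_sphere (u : vec) : Prop := dotv u u = 1.

Definition in_span (f : 'I_n -> vec) (P : pred 'I_n) (v : vec) : Prop :=
  exists c : 'I_n -> R, v = \sum_(q < n | P q) c q *: f q.

Definition rows_mx (f : 'I_n -> vec) : 'M[R]_(n, n.+1) :=
  \matrix_(i < n, j < n.+1) f i 0 j.

(* vertices of the wing Delta_p: b_p and the a_q, q <> p (b_p at position p) *)
Definition wing (a b : 'I_n -> vec) (p : 'I_n) : 'I_n -> vec :=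
  fun i => if i == p then b p else a i.

(* A (labelled) butterfly in S^n: vertices a_1..a_n of Delta and b_1..b_n;
   all simplices Delta, Delta_p are non-degenerate (vertices linearly
   independent). *)
Definition is_butterfly (a b : 'I_n -> vec) : Prop :=
  [/\ forall p, on_sphere (a p),
      forall p, on_sphere (b p),
      row_free (rows_mx a)
    & forall p, row_free (rows_mx (wing a b p))].

(* v = n_p : unit tangent vector to Delta (i.e. in the linear span of Delta),
   orthogonal to the face F_p, pointing into Delta. *)
Definition inward_normal (a : 'I_n -> vec) (p : 'I_n) (v : vec) : Prop :=
  [/\ in_span a predT v, on_sphere v,
      forall q, q != p -> dotv v (a q) = 0
    & 0 < dotv v (a p)].

(* beta = beta_p : sine of the length of the altitude of Delta_p from b_p, i.e.
   the sine of the spherical distance from b_p to the great sphere through F_p,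
   which is the norm of the component of b_p orthogonal to span{a_q, q <> p}. *)
Definition altitude_sine (a b : 'I_n -> vec) (p : 'I_n) (beta : R) : Prop :=
  exists x : vec,
  [/\ in_span a (fun q => q != p) x,
      forall q, q != p -> dotv (b p - x) (a q) = 0
    & beta = Num.sqrt (dotv (b p - x) (b p - x))].

(* bz = b_p^0 : image of b_p under a rotation of E^{n+1} fixing F_p pointwise
   which brings Delta_p into the great sphere of Delta, on the same side of F_p
   as a_p (the side where the inward normal n_p points). *)
Definition rotated_wing_vertex (a b : 'I_n -> vec) (nv : 'I_n -> vec)
    (p : 'I_n) (bz : vec) : Prop :=
  exists Q : 'M[R]_(n.+1),
  [/\ Q *m Q^T = 1%:M, \det Q = 1,
      forall q, q != p -> a q *m Q = a q,
      bz = b p *m Q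
    & in_span a predT bz /\ 0 < dotv bz (nv p)].

Definition butterfly_pair (a b : 'I_n -> vec) (G H : 'M[R]_n) : Prop :=
  exists (nv bz : 'I_n -> vec) (beta : 'I_n -> R),
  [/\ forall p, inward_normal a p (nv p),
      forall p, altitude_sine a b p (beta p),
      forall p, rotated_wing_vertex a b nv p (bz p),
      G = \matrix_(p < n, q < n) dotv (nv p) (nv q)
    & H = \matrix_(p < n, q < n) ((beta p)^-1 * dotv (bz p) (nv q))].

Definition in_W (G H : 'M[R]_n) : Prop :=
  [/\ G^T = G, forall p, G p p = 1 & forall p, H p p = 1].

Definition a_rev (p : 'I_n) (GH : 'M[R]_n * 'M[R]_n) : 'M[R]_n * 'M[R]_n :=
  let G := GH.1 in let H := GH.2 in
  (\matrix_(i < n, j < n) (if (i == p) (+) (j == p) then - G i j else G i j),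
   \matrix_(i < n, j < n)
     (if (i == p) && (j != p) then H i j - 2 * G i j
      else if (j == p) && (i != p) then - H i j else H i j)).

Definition b_rev (p : 'I_n) (GH : 'M[R]_n * 'M[R]_n) : 'M[R]_n * 'M[R]_n :=
  let G := GH.1 in let H := GH.2 in
  (G, \matrix_(i < n, j < n)
        (if (i == p) && (j != p) then 2 * G i j - H i j else H i j)).

Inductive rev_reach (x : 'M[R]_n * 'M[R]_n) : 'M[R]_n * 'M[R]_n -> Prop :=
  | rev_refl : rev_reach x x
  | rev_a p y : rev_reach x y -> rev_reach x (a_rev p y)
  | rev_b p y : rev_reach x y -> rev_reach x (b_rev p y).

Definition in_Psi (G H : 'M[R]_n) : Prop :=
  exists (a b : 'I_n -> vec) (G0 H0 : 'M[R]_n),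
    [/\ is_butterfly a b, butterfly_pair a b G0 H0 & rev_reach (G0, H0) (G, H)].

Definition posdef (G : 'M[R]_n) : Prop :=
  forall x : 'rV[R]_n, x != 0 -> 0 < (x *m G *m x^T) 0 0.

Definition antipodize (f : 'I_n -> vec) (e : 'I_n -> bool) : 'I_n -> vec :=
  fun p => if e p then - f p else f p.

(* Two labelled butterflies are isometric: there is an isometry of the
   butterflies (as piecewise spherical complexes) matching the labels, i.e.
   each simplex Delta, Delta_p of one is congruent to the corresponding simplex
   of the other, compatibly with the vertex labels (equal vertex Gram data). *)
Definition bf_isometric (a b a' b' : 'I_n -> vec) : Prop :=
  (forall p q, dotv (a p) (a q) = dotv (a' p) (a' q)) /\
  (forall p q, q != p -> dotv (b p) (a q) = dotv (b' p) (a' q)).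

End Butterflies.

From mathcomp Require Import all_boot all_order all_algebra reals.
From mathcomp Require Import ring.
Set Implicit Arguments. Unset Strict Implicit. Unset Printing Implicit Defensive.
Import Order.TTheory GRing.Theory Num.Theory.
Local Open Scope ring_scope.

(* Let N, A and Z be the matrices whose rows are the inward normals n_p, the
   vertices a_p and the rotated wing vertices b_p^0 of a butterfly. They span
   the same n-dimensional space, G = N N^T, N A^T = D and Z N^T = B H with D, B
   positive diagonal. Hence G is positive definite and A A^T = D G^-1 D,
   Z A^T = B H G^-1 D, while the unit length of the a_p and b_p^0 determines D
   and B from (G,H). So the dot products a_p . a_q and b_p . a_q (q <> p),
   which fix the butterfly up to isometry, are functions of (G,H). A
   b_p-reversion replaces row p of H by 2 G_p - H_p; an a_p-reversion does the
   same up to conjugating G and H by the reflection of the p-th coordinate.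
   On these functions they act exactly as replacing b_p, resp. a_p, by its
   antipode.
   This keeps G positive definite and gives uniqueness up to antipodes.
   Conversely, for positive definite G = L L^T (Cholesky), the rows of L,
   embedded in E^{n+1}, serve as normals and the same identities produce a
   butterfly with pair (G,H). *)

Section MatrixFacts.
Variable F : fieldType.

Lemma diag_mx_unit n (d : 'rV[F]_n) : (forall i, d 0 i != 0) -> diag_mx d \in unitmx.
Proof. by move=> d_neq0; rewrite unitmxE det_diag unitfE; apply/prodf_neq0. Qed.

Lemma invmx_diag n (d : 'rV[F]_n) : (forall i, d 0 i != 0) ->
  invmx (diag_mx d) = diag_mx (\row_i (d 0 i)^-1).
Proof.
move=> d_neq0; have inv_l : diag_mx (\row_i (d 0 i)^-1) *m diag_mx d = 1%:M.
  apply/matrixP=> i j; rewrite mul_diag_mx !mxE.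
  by have [->|_] := eqVneq i j; rewrite ?mulr1n ?mulr0n ?mulr0 ?mulVf.
by rewrite -[LHS]mul1mx -inv_l -(mulmxA _ (diag_mx d)) mulmxV ?mulmx1 ?diag_mx_unit.
Qed.

Lemma row_free_mul_unit m k (X : 'M[F]_(m, k)) (Y : 'M[F]_(k, m)) :
  X *m Y \in unitmx -> row_free X.
Proof. by move=> XYu; apply/row_freeP; exists (Y *m invmx (X *m Y)); rewrite mulmxA mulmxV. Qed.

Lemma gram_submx m p r k (N : 'M[F]_(m, k)) (Y : 'M[F]_(p, k)) (Y' : 'M[F]_(r, k)) :
  N *m N^T \in unitmx -> (Y <= N)%MS ->
  Y *m Y'^T = Y *m N^T *m invmx (N *m N^T) *m (N *m Y'^T).
Proof.
by move=> NNu /submxP[U ->]; rewrite -(mulmxA U N N^T) mulmxK // mulmxA.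
Qed.

Lemma row_free_diag_off_row n (M : 'M[F]_n) (c : 'I_n -> F) p :
  (forall i j, i != p -> M i j = c i *+ (i == j)) ->
  (forall i, i != p -> c i != 0) -> M p p != 0 -> row_free M.
Proof.
move=> M_diag c_neq0 Mpp; apply: inj_row_free => v vM.
have vM_col j : \sum_i v 0 i * M i j = 0.
  by have := congr1 (fun w : 'rV[F]_n => w 0 j) vM; rewrite !mxE.
have vp : v 0 p = 0.
  have := vM_col p; rewrite (bigD1 p) //= big1 ?addr0 => [/eqP|i ip].
    by rewrite mulf_eq0 (negbTE Mpp) orbF => /eqP.
  by rewrite M_diag // (negbTE ip) mulr0.
apply/rowP => j; rewrite mxE; have [->//|jp] := eqVneq j p.
have := vM_col j; rewrite (bigD1 j) //= M_diag // eqxx mulr1n big1 ?addr0 => [/eqP|i ij].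
  by rewrite mulf_eq0 (negbTE (c_neq0 j jp)) orbF => /eqP.
have [->|ip] := eqVneq i p; first by rewrite vp mul0r.
by rewrite M_diag // (negbTE ij) mulr0.
Qed.

Lemma diag_mulmx_diagE n (e d : 'rV[F]_n) (X : 'M[F]_n) i j :
  (diag_mx e *m X *m diag_mx d) i j = e 0 i * X i j * d 0 j.
Proof. by rewrite mul_mx_diag mul_diag_mx !mxE. Qed.

Lemma mulmx_row_entry m k r (X : 'M[F]_(m, k)) (Y : 'M[F]_(k, r)) i j :
  (X *m Y) i j = (row i X *m Y) 0 j.
Proof. by rewrite -row_mul [RHS]mxE. Qed.

Lemma mulmx_tr_row_entry m k (Y : 'M[F]_(1, k)) (X : 'M[F]_(m, k)) i :
  (Y *m X^T) 0 i = (Y *m (row i X)^T) 0 0.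
Proof. by rewrite !mxE; apply: eq_bigr => l _; rewrite !mxE. Qed.

Lemma row1_mulmx_tr k (v : 'rV[F]_k) p : (row p 1%:M *m v^T) 0 0 = v 0 p.
Proof. by rewrite -row_mul mul1mx !mxE. Qed.

Lemma mulmx_tr_row1 k (v : 'rV[F]_k) p : (v *m (row p 1%:M)^T) 0 0 = v 0 p.
Proof.
rewrite mxE (bigD1 p) //= !mxE eqxx mulr1 big1 ?addr0 // => l lp.
by rewrite !mxE eq_sym (negbTE lp) mulr0.
Qed.

End MatrixFacts.

Section PositiveDefinite.
Variable R : realType.

Lemma sqrtrV_unique (t s : R) : 0 < t -> t * s * t = 1 -> t = Num.sqrt s^-1.
Proof.
move=> t_gt0 tst; have t_neq0 : t != 0 by rewrite gt_eqF.
have -> : s = (t ^+ 2)^-1.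
  by apply: (@mulfI _ (t ^+ 2)); rewrite ?expf_neq0 // mulfV ?expf_neq0 // -tst; ring.
by rewrite invrK sqrtr_sqr gtr0_norm.
Qed.

Lemma sqrtrV_sandwich (k : R) : 0 < k -> Num.sqrt k^-1 * k * Num.sqrt k^-1 = 1.
Proof. by move=> k_gt0; rewrite mulrAC -expr2 sqr_sqrtr ?invr_ge0 ?ltW // mulVf ?gt_eqF. Qed.

Lemma dot_self_ge0 k (v : 'rV[R]_k) : 0 <= (v *m v^T) 0 0.
Proof. by rewrite mxE; apply: sumr_ge0 => l _; rewrite mxE -expr2 sqr_ge0. Qed.

Lemma dot_self_eq0 k (v : 'rV[R]_k) : ((v *m v^T) 0 0 == 0) = (v == 0).
Proof.
apply/idP/eqP => [|->]; last by rewrite mul0mx !mxE.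
rewrite mxE psumr_eq0 => [/allP v0|l _]; last by rewrite mxE -expr2 sqr_ge0.
apply/rowP=> l; have := v0 l (mem_index_enum l); rewrite mxE /= mxE.
by rewrite mulf_eq0 orbb => /eqP ->.
Qed.

Lemma dot_self_gt0 k (v : 'rV[R]_k) : v != 0 -> 0 < (v *m v^T) 0 0.
Proof. by move=> v0; rewrite lt_def dot_self_eq0 v0 dot_self_ge0. Qed.

Lemma gram_posdef m k (N : 'M[R]_(m, k)) : row_free N -> posdef (N *m N^T).
Proof.
move=> Nfree x x0; have xN0 : x *m N != 0 by rewrite mulmx_free_eq0.
by have := dot_self_gt0 xN0; rewrite trmx_mul !mulmxA.
Qed.

Lemma posdef_conj m (G X : 'M[R]_m) : posdef G -> X \in unitmx -> posdef (X *m G *m X^T).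
Proof.
move=> Gpd Xu y y0; rewrite -row_free_unit in Xu.
have yX0 : y *m X != 0 by rewrite mulmx_free_eq0.
by have := Gpd _ yX0; rewrite trmx_mul !mulmxA.
Qed.

Lemma posdef_unit m (G : 'M[R]_m) : posdef G -> G \in unitmx.
Proof.
move=> Gpd; rewrite -row_free_unit; apply: inj_row_free => v vG; apply/eqP.
by apply: contraT => v0; have := Gpd _ v0; rewrite vG mul0mx mxE ltxx.
Qed.

Lemma posdef_diag_gt0 m (G : 'M[R]_m) p : posdef G -> 0 < G p p.
Proof.
have e0 : row p (1%:M : 'M[R]_m) != 0.
  by apply/eqP => /rowP /(_ p); rewrite !mxE eqxx => /eqP; rewrite oner_eq0.
by move=> /(_ _ e0); rewrite -row_mul mul1mx mulmx_tr_row1 mxE.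
Qed.

End PositiveDefinite.

Section Cholesky.
Variable R : realType.

Lemma quad_form_block m (u : 'M[R]_1) (y : 'rV[R]_m) (A : 'M[R]_1) (B : 'M[R]_(1, m))
    (D : 'M[R]_m) :
  row_mx u y *m block_mx A B B^T D *m (row_mx u y)^T =
  u *m A *m u^T + y *m B^T *m u^T + (u *m B *m y^T + y *m D *m y^T).
Proof. by rewrite mul_row_block tr_row_mx mul_row_col !mulmxDl. Qed.

Lemma mx11_mulE (P Q : 'M[R]_1) : (P *m Q) 0 0 = P 0 0 * Q 0 0.
Proof. by rewrite mxE big_ord1. Qed.

Section Schur.
Variables (m : nat) (al : R) (g : 'rV[R]_m) (D : 'M[R]_m).
Hypothesis Mpd : posdef (block_mx al%:M g g^T D : 'M[R]_(1 + m)).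

Lemma posdef_block_corner : 0 < al.
Proof.
have x0 : row_mx (1%:M : 'M[R]_1) (0 : 'rV[R]_m) != 0.
  apply/eqP => /(congr1 lsubmx); rewrite row_mxKl => /matrixP /(_ 0 0).
  by rewrite !mxE /= => /eqP; rewrite oner_eq0.
have := Mpd x0; rewrite quad_form_block trmx0 trmx1 !mul0mx !mulmx0 !addr0 mulmx1 mul1mx.
by rewrite mxE mulr1n.
Qed.

Lemma posdef_schur : posdef (D - al^-1 *: (g^T *m g)).
Proof.
have al_neq0 : al != 0 by rewrite gt_eqF ?posdef_block_corner.
move=> y y0; pose c := (y *m g^T) 0 0; pose u : 'M[R]_1 := (- (c / al))%:M.
have x0 : row_mx u y != 0.
  by apply: contraNneq y0 => /(congr1 rsubmx); rewrite row_mxKr => ->; rewrite linear0.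
have cE : (g *m y^T) 0 0 = c by rewrite -[g]trmxK -trmx_mul mxE.
have u00 : u 0 0 = - (c / al) by rewrite mxE mulr1n.
have uT00 : u^T 0 0 = - (c / al) by rewrite mxE.
have t1 : (u *m al%:M *m u^T) 0 0 = (c / al) * (c / al) * al.
  by rewrite !mx11_mulE u00 uT00 mxE mulr1n; ring.
have t2 : (y *m g^T *m u^T) 0 0 = - (c * (c / al)) by rewrite mx11_mulE uT00 -/c; ring.
have t3 : (u *m g *m y^T) 0 0 = - (c * (c / al)).
  by rewrite -mulmxA mx11_mulE cE u00; ring.
have Sy : (y *m (D - al^-1 *: (g^T *m g)) *m y^T) 0 0 =
    (y *m D *m y^T) 0 0 - al^-1 * (c * c).
  rewrite mulmxBr mulmxBl -scalemxAr -scalemxAl (mulmxA y g^T) -(mulmxA _ g).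
  by rewrite [LHS]mxE [X in _ + X]mxE [X in - X]mxE mx11_mulE cE.
rewrite Sy; have -> : (y *m D *m y^T) 0 0 - al^-1 * (c * c) =
    (row_mx u y *m block_mx al%:M g g^T D *m (row_mx u y)^T) 0 0.
  rewrite quad_form_block; move: t1 t2 t3.
  set q1 := u *m _ *m _; set q2 := y *m _ *m u^T; set q3 := u *m g *m _.
  set q4 := y *m D *m y^T => t1 t2 t3; clearbody q1 q2 q3 q4.
  by rewrite !mxE t1 t2 t3; field.
exact: Mpd x0.
Qed.

End Schur.

Lemma cholesky m (G : 'M[R]_m) : G^T = G -> posdef G -> exists L : 'M[R]_m, G = L *m L^T.
Proof.
elim: m G => [|m IH] G GT Gpd; first by exists 0; apply/matrixP => [[]].
pose G1 : 'M[R]_(1 + m) := G.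
pose al := ulsubmx G1 0 0; pose g := ursubmx G1; pose D := drsubmx G1.
have GE : G1 = block_mx al%:M g g^T D.
  by rewrite -[G1]submxK -mx11_scalar /g trmx_ursub GT.
have Mpd : posdef (block_mx al%:M g g^T D : 'M[R]_(1 + m)) by rewrite -GE.
have al_gt0 : 0 < al := posdef_block_corner Mpd.
have DT : D^T = D by rewrite /D trmx_drsub GT.
have ST : (D - al^-1 *: (g^T *m g))^T = D - al^-1 *: (g^T *m g).
  by rewrite linearB /= linearZ /= trmx_mul trmxK DT.
have [L' L'E] := IH _ ST (posdef_schur Mpd).
pose s := Num.sqrt al.
have s_neq0 : s != 0 by rewrite sqrtr_eq0 -ltNge.
have ss : s * s = al by rewrite -expr2 sqr_sqrtr // ltW.
pose L : 'M[R]_(1 + m) := block_mx s%:M 0 (s^-1 *: g^T) L'.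
exists L; change (G1 = L *m L^T); rewrite GE /L tr_block_mx mulmx_block.
rewrite !trmx0 !mulmx0 !mul0mx !addr0 !tr_scalar_mx linearZ /= trmxK.
congr block_mx.
- by rewrite -scalar_mxM ss.
- by rewrite mul_scalar_mx scalerA mulfV // scale1r.
- by rewrite mul_mx_scalar scalerA mulfV // scale1r.
- by rewrite -L'E -scalemxAl -scalemxAr scalerA -ss invfM addrC subrK.
Qed.

End Cholesky.

Section Reversions.
Variables (R : realType) (n : nat).
Implicit Types (G H X Y : 'M[R]_n) (p i j : 'I_n).

Lemma signr_conj (b : bool) (x : R) : (-1) ^+ b * x * (-1) ^+ b = x.
Proof. by rewrite mulrAC -expr2 sqrr_sign mul1r. Qed.

Definition refl_mx p : 'M[R]_n := diag_mx (\row_i (-1) ^+ (i == p)).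

Lemma conj_refl_mxE p X i j :
  (refl_mx p *m X *m refl_mx p) i j = (-1) ^+ (i == p) * X i j * (-1) ^+ (j == p).
Proof. by rewrite diag_mulmx_diagE !mxE. Qed.

Lemma refl_mxK p : refl_mx p *m refl_mx p = 1%:M.
Proof.
apply/matrixP=> i j; rewrite mul_diag_mx !mxE.
by have [->|_] := eqVneq i j; rewrite ?mulr1n ?mulr0n ?mulr0 // -expr2 sqrr_sign.
Qed.

Lemma tr_refl_mx p : (refl_mx p)^T = refl_mx p.
Proof. exact: tr_diag_mx. Qed.

Lemma conj_refl_mxM p X Y :
  refl_mx p *m X *m refl_mx p *m (refl_mx p *m Y *m refl_mx p) =
  refl_mx p *m (X *m Y) *m refl_mx p.
Proof. by rewrite -!mulmxA (mulmxA (refl_mx p) (refl_mx p)) refl_mxK mul1mx. Qed.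

Lemma trmx_conj_refl p X : (refl_mx p *m X *m refl_mx p)^T = refl_mx p *m X^T *m refl_mx p.
Proof. by rewrite !trmx_mul tr_refl_mx mulmxA. Qed.

Lemma refl_mx_unit p : refl_mx p \in unitmx.
Proof. by case: (mulmx1_unit (refl_mxK p)). Qed.

Lemma conj_refl_unit p X : (refl_mx p *m X *m refl_mx p \in unitmx) = (X \in unitmx).
Proof. by rewrite !unitmx_mul refl_mx_unit andbT. Qed.

Lemma invmx_conj_refl p X : X \in unitmx ->
  invmx (refl_mx p *m X *m refl_mx p) = refl_mx p *m invmx X *m refl_mx p.
Proof.
move=> Xu; have SXSu : refl_mx p *m X *m refl_mx p \in unitmx by rewrite conj_refl_unit.
have inv_l : refl_mx p *m invmx X *m refl_mx p *m (refl_mx p *m X *m refl_mx p) = 1%:M.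
  by rewrite conj_refl_mxM mulVmx // mulmx1 refl_mxK.
by rewrite -[LHS]mul1mx -inv_l -(mulmxA _ (refl_mx p *m X *m refl_mx p)) mulmxV // mulmx1.
Qed.

(* See [vertices_gram] and [wing_dotE] for where these formulas come from. *)
Definition vertex_dot G p q : R :=
  let K := invmx G in Num.sqrt (K p p)^-1 * Num.sqrt (K q q)^-1 * K p q.

Definition wing_dot G H p q : R :=
  let K := invmx G in
  Num.sqrt ((H *m K *m H^T) p p)^-1 * (H *m K) p q * Num.sqrt (K q q)^-1.

Lemma vertex_dot_conj_refl p G i j : G \in unitmx ->
  vertex_dot (refl_mx p *m G *m refl_mx p) i j =
  (-1) ^+ (i == p) * (-1) ^+ (j == p) * vertex_dot G i j.
Proof. by move=> Gu; rewrite /vertex_dot invmx_conj_refl // !conj_refl_mxE !signr_conj; ring. Qed.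

Lemma wing_dot_conj_refl p G H i j : G \in unitmx ->
  wing_dot (refl_mx p *m G *m refl_mx p) (refl_mx p *m H *m refl_mx p) i j =
  (-1) ^+ (i == p) * (-1) ^+ (j == p) * wing_dot G H i j.
Proof.
move=> Gu; rewrite /wing_dot invmx_conj_refl // conj_refl_mxM trmx_conj_refl.
by rewrite conj_refl_mxM !conj_refl_mxE !signr_conj; ring.
Qed.

(* Both reversions at p act on H through this map (the a_p-reversion after
   conjugating by [refl_mx p]). *)
Definition reflect_row p G H : 'M[R]_n :=
  \matrix_(i, j) (if i == p then 2 * G i j - H i j else H i j).

Lemma a_rev_G p G H : (a_rev p (G, H)).1 = refl_mx p *m G *m refl_mx p.
Proof.
apply/matrixP=> i j; rewrite conj_refl_mxE !mxE /=.
by case: (i == p); case: (j == p); rewrite /= ?expr0 ?expr1; ring.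
Qed.

Lemma a_rev_H p G H : in_W G H ->
  (a_rev p (G, H)).2 = refl_mx p *m reflect_row p G H *m refl_mx p.
Proof.
case=> _ Gd Hd; apply/matrixP=> i j; rewrite conj_refl_mxE !mxE /=.
have [->|ip] := eqVneq i p; have [->|jp] := eqVneq j p;
  rewrite /= ?expr0 ?expr1 ?Gd ?Hd; ring.
Qed.

Lemma b_rev_H p G H : in_W G H -> (b_rev p (G, H)).2 = reflect_row p G H.
Proof.
case=> _ Gd Hd; apply/matrixP=> i j; rewrite !mxE /=.
have [->|ip] := eqVneq i p; have [->|jp] := eqVneq j p; rewrite /= ?Gd ?Hd //; ring.
Qed.

Lemma in_W_a_rev p G H : in_W G H -> in_W (a_rev p (G, H)).1 (a_rev p (G, H)).2.
Proof.
move=> W; have [GT Gd Hd] := W; rewrite a_rev_G a_rev_H //; split.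
- by rewrite trmx_conj_refl GT.
- by move=> i; rewrite conj_refl_mxE signr_conj.
- by move=> i; rewrite conj_refl_mxE signr_conj mxE; case: ifP => _; rewrite ?Gd Hd //; ring.
Qed.

Lemma in_W_b_rev p G H : in_W G H -> in_W (b_rev p (G, H)).1 (b_rev p (G, H)).2.
Proof.
move=> W; have [GT Gd Hd] := W; rewrite b_rev_H //; split => // i.
by rewrite mxE; case: ifP => _; rewrite ?Gd Hd //; ring.
Qed.

Lemma wing_dot_reflect_row p G H i j : in_W G H -> G \in unitmx -> i != j ->
  wing_dot G (reflect_row p G H) i j = (-1) ^+ (i == p) * wing_dot G H i j.
Proof.
move=> [GT Gd Hd] Gu ij; rewrite /wing_dot; set K := invmx G; set M := reflect_row p G H.
have quad X : (X *m K *m X^T) i i = (row i X *m K *m (row i X)^T) 0 0.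
  by rewrite mulmx_row_entry row_mul mulmx_tr_row_entry.
have [ip|ip] := eqVneq i p; last first.
  have rowM : row i M = row i H by apply/rowP=> k; rewrite !mxE (negbTE ip).
  by rewrite expr0 mul1r !quad (mulmx_row_entry M K) (mulmx_row_entry H K) rowM.
subst i; rewrite expr1 mulN1r.
have KT : K^T = K by rewrite trmx_inv GT.
have GK : G *m K = 1%:M by rewrite mulmxV.
have rowM : row p M = 2 *: row p G - row p H by apply/rowP=> k; rewrite !mxE eqxx.
have rowMK : row p M *m K = 2 *: row p 1%:M - row p H *m K.
  by rewrite rowM mulmxBl -scalemxAl -row_mul GK.
have MK : (M *m K) p j = - (H *m K) p j.
  rewrite (mulmx_row_entry M K) (mulmx_row_entry H K) rowMK; set w := row p H *m K.
  by rewrite !mxE (negbTE ij) mulr0 sub0r.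
have HKG : (row p H *m K *m (row p G)^T) 0 0 = 1.
  by rewrite -mulmxA -{1}KT -trmx_mul -(row_mul p G K) GK mulmx_tr_row1 mxE Hd.
have MKM : (M *m K *m M^T) p p = (H *m K *m H^T) p p.
  rewrite !quad rowMK rowM; set w := row p H *m K.
  rewrite linearB /= linearZ /= mulmxBl !mulmxBr -!scalemxAl -!scalemxAr.
  have e1 : (row p 1%:M *m (row p G)^T) 0 0 = 1 by rewrite row1_mulmx_tr mxE Gd.
  have e2 : (row p 1%:M *m (row p H)^T) 0 0 = 1 by rewrite row1_mulmx_tr mxE Hd.
  move: e1 e2 HKG; set g1 := row p 1%:M *m _; set h1 := row p 1%:M *m _.
  set wg := w *m (row p G)^T; set wh := w *m _ => e1 e2 e3.
  clearbody g1 h1 wg wh; rewrite !mxE e1 e2 e3; ring.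
by rewrite MK MKM; ring.
Qed.

Lemma vertex_dot_a_rev p G H i j : G \in unitmx ->
  vertex_dot (a_rev p (G, H)).1 i j = (-1) ^+ (i == p) * (-1) ^+ (j == p) * vertex_dot G i j.
Proof. by move=> Gu; rewrite a_rev_G vertex_dot_conj_refl. Qed.

Lemma wing_dot_a_rev p G H i j : in_W G H -> G \in unitmx -> i != j ->
  wing_dot (a_rev p (G, H)).1 (a_rev p (G, H)).2 i j = (-1) ^+ (j == p) * wing_dot G H i j.
Proof.
move=> W Gu ij; rewrite a_rev_G a_rev_H // wing_dot_conj_refl // wing_dot_reflect_row //.
by rewrite mulrCA !mulrA -expr2 sqrr_sign mul1r.
Qed.

Lemma wing_dot_b_rev p G H i j : in_W G H -> G \in unitmx -> i != j ->
  wing_dot (b_rev p (G, H)).1 (b_rev p (G, H)).2 i j = (-1) ^+ (i == p) * wing_dot G H i j.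
Proof. by move=> W Gu ij; rewrite b_rev_H //= wing_dot_reflect_row. Qed.

End Reversions.

Section EuclideanDot.
Variables (R : realType) (n : nat).
Notation vec := 'rV[R]_(n.+1).
Implicit Types (u v w : vec) (f g : 'I_n -> vec).

Lemma dotvC u v : dotv u v = dotv v u.
Proof. by rewrite /dotv !mxE; apply: eq_bigr => k _; rewrite !mxE mulrC. Qed.

Lemma dotvDl u w v : dotv (u + w) v = dotv u v + dotv w v.
Proof. by rewrite /dotv mulmxDl mxE. Qed.

Lemma dotvBl u w v : dotv (u - w) v = dotv u v - dotv w v.
Proof. by rewrite /dotv mulmxBl [LHS]mxE [X in _ + X]mxE. Qed.

Lemma dotvZl c u v : dotv (c *: u) v = c * dotv u v.
Proof. by rewrite /dotv -scalemxAl mxE. Qed.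

Lemma dotvZr c u v : dotv u (c *: v) = c * dotv u v.
Proof. by rewrite dotvC dotvZl dotvC. Qed.

Lemma dotv_suml (I : Type) (r : seq I) (P : pred I) (F : I -> vec) v :
  dotv (\sum_(i <- r | P i) F i) v = \sum_(i <- r | P i) dotv (F i) v.
Proof.
elim/big_rec2: _ => [|i y1 y2 _ <-]; first by rewrite /dotv mul0mx mxE.
by rewrite dotvDl.
Qed.

Lemma dotv_orthomx (Q : 'M[R]_(n.+1)) u v : Q *m Q^T = 1%:M ->
  dotv (u *m Q) (v *m Q) = dotv u v.
Proof. by move=> QQ; rewrite /dotv trmx_mul mulmxA -(mulmxA u) QQ mulmx1. Qed.

Lemma row_rows_mx f p : row p (rows_mx f) = f p.
Proof. by apply/rowP=> j; rewrite !mxE. Qed.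

Lemma rows_mx_row (X : 'M[R]_(n, n.+1)) : rows_mx (fun p => row p X) = X.
Proof. by apply/matrixP=> i j; rewrite !mxE. Qed.

Lemma dotv_row u (Y : 'M[R]_(n, n.+1)) q : dotv u (row q Y) = (u *m Y^T) 0 q.
Proof. by rewrite /dotv [RHS]mulmx_tr_row_entry. Qed.

Lemma dotv_row_row (X Y : 'M[R]_(n, n.+1)) p q : dotv (row p X) (row q Y) = (X *m Y^T) p q.
Proof. by rewrite dotv_row -row_mul [LHS]mxE. Qed.

Lemma dotv_rows f g p q : dotv (f p) (g q) = (rows_mx f *m (rows_mx g)^T) p q.
Proof. by rewrite -(row_rows_mx g) dotv_row -(row_rows_mx f) [RHS]mulmx_row_entry. Qed.

Lemma in_span_submx f P v : in_span f P v -> (v <= rows_mx f)%MS.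
Proof.
move=> [c ->]; apply: summx_sub => q _; apply: scalemx_sub.
by rewrite -row_rows_mx row_sub.
Qed.

Lemma in_span_rows f (M : 'M[R]_n) p : in_span f predT (row p (M *m rows_mx f)).
Proof.
exists (fun q => M p q); rewrite row_mul mulmx_sum_row.
by apply: eq_bigr => q _; rewrite row_rows_mx mxE.
Qed.

Lemma in_span_rows_off f (M : 'M[R]_n) p : M p p = 0 ->
  in_span f (fun q => q != p) (row p (M *m rows_mx f)).
Proof.
move=> Mpp; exists (fun q => M p q).
rewrite row_mul mulmx_sum_row (bigD1 p) //= mxE Mpp scale0r add0r.
by apply: eq_bigr => q _; rewrite row_rows_mx mxE.
Qed.

End EuclideanDot.

Section ButterflyPair.
Variables (R : realType) (n : nat).
Notation vec := 'rV[R]_(n.+1).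
Variables (a b nv bz : 'I_n -> vec) (beta : 'I_n -> R) (H : 'M[R]_n).
Hypothesis a_unit : forall p, on_sphere (a p).
Hypothesis b_unit : forall p, on_sphere (b p).
Hypothesis wing_free : forall p, row_free (rows_mx (wing a b p)).
Hypothesis nv_normal : forall p, inward_normal a p (nv p).
Hypothesis beta_alt : forall p, altitude_sine a b p (beta p).
Hypothesis bz_rot : forall p, rotated_wing_vertex a b nv p (bz p).
Hypothesis HE : H = \matrix_(p, q) ((beta p)^-1 * dotv (bz p) (nv q)).

Let A := rows_mx a.
Let N := rows_mx nv.
Let Z := rows_mx bz.
Let G := N *m N^T.
Let K := invmx G.
Let d := \row_p dotv (nv p) (a p).

Lemma inward_dot_gt0 p : 0 < d 0 p.
Proof. by rewrite mxE; case: (nv_normal p). Qed.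

Lemma normals_dot_vertices : N *m A^T = diag_mx d.
Proof.
apply/matrixP=> p q; rewrite -dotv_rows !mxE.
have [->|pq] := eqVneq p q; first by rewrite mulr1n.
by case: (nv_normal p) => _ _ nv_orth _; rewrite nv_orth // eq_sym.
Qed.

Lemma diag_inward_unit : diag_mx d \in unitmx.
Proof. by apply: diag_mx_unit => p; rewrite gt_eqF ?inward_dot_gt0. Qed.

Lemma normals_free : row_free N.
Proof.
by apply: (@row_free_mul_unit _ _ _ _ A^T); rewrite normals_dot_vertices diag_inward_unit.
Qed.

Lemma gram_normals_posdef : posdef G.
Proof. exact: gram_posdef normals_free. Qed.

Lemma gram_normals_unit : G \in unitmx.
Proof. exact: posdef_unit gram_normals_posdef. Qed.

Lemma vertices_submx : (A <= N)%MS.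
Proof.
have N_A : (N <= A)%MS.
  by apply/row_subP => p; rewrite row_rows_mx; case: (nv_normal p) => /in_span_submx.
rewrite -(mxrank_leqif_sup N_A).2 eqn_leq (mxrank_leqif_sup N_A).1 (eqP normals_free).
exact: rank_leq_row.
Qed.

Lemma vertices_gram : A *m A^T = diag_mx d *m K *m diag_mx d.
Proof.
rewrite (gram_submx _ gram_normals_unit vertices_submx) normals_dot_vertices.
by rewrite -[A *m N^T]trmxK trmx_mul trmxK normals_dot_vertices tr_diag_mx.
Qed.

Lemma inward_dotE p : d 0 p = Num.sqrt (K p p)^-1.
Proof.
apply: sqrtrV_unique; first exact: inward_dot_gt0.
by have := a_unit p; rewrite /on_sphere dotv_rows vertices_gram diag_mulmx_diagE.
Qed.

Lemma vertex_dotE p q : dotv (a p) (a q) = vertex_dot G p q.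
Proof. by rewrite dotv_rows vertices_gram diag_mulmx_diagE /vertex_dot -!inward_dotE; ring. Qed.

Lemma gram_normals_diag p : G p p = 1.
Proof. by rewrite -dotv_rows; case: (nv_normal p). Qed.

Lemma orth_face_normal p y : (y <= N)%MS ->
  (forall q, q != p -> dotv y (a q) = 0) -> y = dotv y (nv p) *: nv p.
Proof.
move=> /submxP[v ->] y_orth.
have v_off q : q != p -> v 0 q = 0.
  move=> qp; have := y_orth q qp.
  rewrite -(row_rows_mx a) dotv_row -mulmxA normals_dot_vertices mul_mx_diag mxE.
  by move/eqP; rewrite mulf_eq0 (gt_eqF (inward_dot_gt0 q)) orbF => /eqP.
have yE : v *m N = v 0 p *: nv p.
  rewrite mulmx_sum_row (bigD1 p) //= big1 ?addr0 ?row_rows_mx // => q qp.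
  by rewrite v_off // scale0r.
by rewrite yE dotvZl; case: (nv_normal p) => _ -> _ _; rewrite mulr1.
Qed.

(* beta_p = 0 would put b_p in the span of the face F_p. *)
Lemma beta_gt0 p : 0 < beta p.
Proof.
have [x [[c xE] _ ->]] := beta_alt p.
rewrite sqrtr_gt0 lt_def dot_self_eq0 dot_self_ge0 andbT subr_eq0.
apply/eqP => bx; pose w : 'rV[R]_n := \row_i (if i == p then 1 else - c i).
have wW : w *m rows_mx (wing a b p) = 0.
  rewrite mulmx_sum_row (bigD1 p) //= row_rows_mx /wing eqxx mxE eqxx scale1r.
  rewrite bx xE -big_split /= big1 // => i ip.
  by rewrite row_rows_mx /wing (negbTE ip) mxE (negbTE ip) scaleNr addrN.
move: wW; rewrite -(mul0mx _ (rows_mx (wing a b p))) => /(row_free_inj (wing_free p)).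
by move/rowP/(_ p); rewrite !mxE eqxx => /eqP; rewrite oner_eq0.
Qed.

(* The component of b_p^0 orthogonal to F_p lies in span(Delta), so it is a
   multiple of n_p; its length is beta_p and its sign that of b_p^0 . n_p > 0. *)
Lemma rotated_dot_normal p : dotv (bz p) (nv p) = beta p.
Proof.
have [Q [QQ _ Q_fix bzE [bz_span bz_pos]]] := bz_rot p.
have [x [[c xE] x_orth betaE]] := beta_alt p.
have xQ : x *m Q = x.
  by rewrite xE mulmx_suml; apply: eq_bigr => q qp; rewrite -scalemxAl Q_fix.
have yQ : bz p - x = (b p - x) *m Q by rewrite mulmxBl xQ bzE.
have y_sub : (bz p - x <= N)%MS.
  apply: submx_trans vertices_submx; apply: addmx_sub; first exact: in_span_submx bz_span.
  by rewrite eqmx_opp; apply: (@in_span_submx _ _ _ (fun q => q != p)); exists c.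
have y_orth q : q != p -> dotv (bz p - x) (a q) = 0.
  by move=> qp; rewrite yQ -(Q_fix q qp) dotv_orthomx ?x_orth.
have x_nv : dotv x (nv p) = 0.
  rewrite xE dotv_suml big1 // => q qp; rewrite dotvZl dotvC.
  by case: (nv_normal p) => _ _ nv_orth _; rewrite nv_orth ?mulr0.
have bz_y : dotv (bz p) (nv p) = dotv (bz p - x) (nv p) by rewrite dotvBl x_nv subr0.
have yE := orth_face_normal y_sub y_orth.
rewrite betaE -(dotv_orthomx (b p - x) (b p - x) QQ) -yQ yE dotvZl dotvZr.
case: (nv_normal p) => _ -> _ _; rewrite mulr1 -expr2 sqrtr_sqr -bz_y gtr0_norm //.
Qed.

Lemma pair_H_diag p : H p p = 1.
Proof. by rewrite HE mxE rotated_dot_normal mulVf // gt_eqF ?beta_gt0. Qed.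

Lemma rotated_submx : (Z <= N)%MS.
Proof.
apply: submx_trans vertices_submx; apply/row_subP => p; rewrite row_rows_mx.
by have [Q [_ _ _ _ [/in_span_submx]]] := bz_rot p.
Qed.

Lemma rotated_dot_normals : Z *m N^T = diag_mx (\row_p beta p) *m H.
Proof.
apply/matrixP=> p q; rewrite -dotv_rows mul_diag_mx HE !mxE mulrA mulfV ?mul1r //.
by rewrite gt_eqF ?beta_gt0.
Qed.

Lemma altitude_sineE p : beta p = Num.sqrt ((H *m K *m H^T) p p)^-1.
Proof.
have ZZ : Z *m Z^T = diag_mx (\row_p beta p) *m (H *m K *m H^T) *m diag_mx (\row_p beta p).
  rewrite (gram_submx _ gram_normals_unit rotated_submx) rotated_dot_normals.
  rewrite -[N *m Z^T]trmxK trmx_mul trmxK rotated_dot_normals trmx_mul tr_diag_mx.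
  by rewrite !mulmxA.
apply: sqrtrV_unique; first exact: beta_gt0.
have [Q [QQ _ _ bzE _]] := bz_rot p.
have := b_unit p; rewrite /on_sphere -(dotv_orthomx _ _ QQ) -bzE dotv_rows ZZ.
by rewrite diag_mulmx_diagE !mxE.
Qed.

Lemma wing_dotE p q : q != p -> dotv (b p) (a q) = wing_dot G H p q.
Proof.
move=> qp; have [Q [QQ _ Q_fix bzE _]] := bz_rot p.
rewrite -(dotv_orthomx (b p) (a q) QQ) -bzE Q_fix // dotv_rows.
rewrite (gram_submx _ gram_normals_unit rotated_submx) rotated_dot_normals normals_dot_vertices.
rewrite -(mulmxA (diag_mx _) H) diag_mulmx_diagE /wing_dot -altitude_sineE -inward_dotE !mxE; ring.
Qed.

End ButterflyPair.

Section Realization.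
Variables (R : realType) (n : nat).
Notation vec := 'rV[R]_(n.+1).
Implicit Types (a b : 'I_n -> vec) (e : 'I_n -> bool) (G H : 'M[R]_n).

Definition realizes_pair a b G H : Prop :=
  [/\ in_W G H, G \in unitmx,
      forall p q, dotv (a p) (a q) = vertex_dot G p q
    & forall p q, q != p -> dotv (b p) (a q) = wing_dot G H p q].

Lemma butterfly_pair_realizes a b G H : is_butterfly a b -> butterfly_pair a b G H ->
  realizes_pair a b G H /\ posdef G.
Proof.
move=> [a_unit b_unit _ wing_free] [nv [bz [beta [nv_normal beta_alt bz_rot GE HE]]]].
have -> : G = rows_mx nv *m (rows_mx nv)^T.
  by rewrite GE; apply/matrixP=> p q; rewrite mxE dotv_rows.
split; last exact: gram_normals_posdef nv_normal.
split.
- split; first by rewrite trmx_mul trmxK.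
    exact: gram_normals_diag nv_normal.
  exact: pair_H_diag wing_free nv_normal beta_alt bz_rot HE.
- exact: gram_normals_unit nv_normal.
- exact: vertex_dotE a_unit nv_normal.
- exact: wing_dotE a_unit b_unit wing_free nv_normal beta_alt bz_rot HE.
Qed.

Lemma antipodizeE (f : 'I_n -> vec) e p : antipodize f e p = (-1) ^+ e p *: f p.
Proof. by rewrite /antipodize; case: (e p); rewrite ?expr1 ?scaleN1r ?expr0 ?scale1r. Qed.

Lemma dotv_antipodize (f g : 'I_n -> vec) e e' p q :
  dotv (antipodize f e p) (antipodize g e' q) = (-1) ^+ e p * ((-1) ^+ e' q * dotv (f p) (g q)).
Proof. by rewrite !antipodizeE dotvZl dotvZr. Qed.

Lemma realizes_a_rev p a b ea eb G H :
  realizes_pair (antipodize a ea) (antipodize b eb) G H ->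
  realizes_pair (antipodize a (fun i => (i == p) (+) ea i)) (antipodize b eb)
    (a_rev p (G, H)).1 (a_rev p (G, H)).2.
Proof.
move=> [W Gu vdot wdot]; split.
- exact: in_W_a_rev.
- by rewrite a_rev_G conj_refl_unit.
- move=> i j; rewrite vertex_dot_a_rev // -vdot.
  by rewrite !dotv_antipodize !signr_addb; ring.
- move=> i j ji; have ij : i != j by rewrite eq_sym.
  rewrite wing_dot_a_rev // -wdot //.
  by rewrite !dotv_antipodize !signr_addb; ring.
Qed.

Lemma realizes_b_rev p a b ea eb G H :
  realizes_pair (antipodize a ea) (antipodize b eb) G H ->
  realizes_pair (antipodize a ea) (antipodize b (fun i => (i == p) (+) eb i))
    (b_rev p (G, H)).1 (b_rev p (G, H)).2.
Proof.
move=> [W Gu vdot wdot]; split => //.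
- exact: in_W_b_rev.
- move=> i j ji; have ij : i != j by rewrite eq_sym.
  rewrite wing_dot_b_rev // -wdot //.
  by rewrite !dotv_antipodize !signr_addb; ring.
Qed.

Lemma realizes_rev_reach a b x y : rev_reach x y -> realizes_pair a b x.1 x.2 ->
  exists ea eb, realizes_pair (antipodize a ea) (antipodize b eb) y.1 y.2.
Proof.
move=> r ab; elim: r => [|p [G H] _ [ea [eb IH]]|p [G H] _ [ea [eb IH]]].
- by exists (fun=> false), (fun=> false).
- by exists (fun i => (i == p) (+) ea i), eb; apply: realizes_a_rev.
- by exists ea, (fun i => (i == p) (+) eb i); apply: realizes_b_rev.
Qed.

Lemma signr_transfer (b1 b2 c1 c2 : bool) (x y : R) :
  (-1) ^+ b1 * ((-1) ^+ b2 * x) = (-1) ^+ c1 * ((-1) ^+ c2 * y) ->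
  (-1) ^+ (b1 (+) c1) * ((-1) ^+ (b2 (+) c2) * x) = y.
Proof.
move=> e; rewrite !signr_addb.
transitivity ((-1) ^+ c1 * ((-1) ^+ c2 * ((-1) ^+ b1 * ((-1) ^+ b2 * x)))); first ring.
by rewrite e mulrCA !signrMK.
Qed.

Lemma realizes_pair_isometric a b a' b' ea eb ea' eb' G H :
  realizes_pair (antipodize a ea) (antipodize b eb) G H ->
  realizes_pair (antipodize a' ea') (antipodize b' eb') G H ->
  bf_isometric (antipodize a (fun i => ea i (+) ea' i))
               (antipodize b (fun i => eb i (+) eb' i)) a' b'.
Proof.
move=> [_ _ vdot wdot] [_ _ vdot' wdot']; split => [p q|p q qp].
- by rewrite dotv_antipodize; apply: signr_transfer; rewrite -!dotv_antipodize vdot vdot'.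
- by rewrite dotv_antipodize; apply: signr_transfer; rewrite -!dotv_antipodize wdot ?wdot'.
Qed.

End Realization.

Section Construction.
Variables (R : realType) (n : nat) (G H L : 'M[R]_n).
Hypothesis GH_W : in_W G H.
Hypothesis G_posdef : posdef G.
Hypothesis GL : G = L *m L^T.

(* The normals n_p are the rows of [0 | L], so that their Gram matrix is G;
   the a_p and b_p are then solved from A N^T = D and Z N^T = diag(beta) H.
   The b_p already lie in the great sphere of Delta, so no rotation is needed. *)
Let N : 'M[R]_(n, n.+1) := row_mx (0 : 'cV[R]_n) L.
Let K := invmx G.
Let d := \row_p Num.sqrt (K p p)^-1.
Let beta := \row_p Num.sqrt ((H *m K *m H^T) p p)^-1.
Let A := diag_mx d *m K *m N.
Let Z := diag_mx beta *m H *m K *m N.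

Let G_unit : G \in unitmx := posdef_unit G_posdef.
Let GK : G *m K = 1%:M := mulmxV G_unit.
Let KG : K *m G = 1%:M := mulVmx G_unit.

Lemma normals_gram : N *m N^T = G.
Proof.
change (row_mx (0 : 'cV[R]_n) L *m (row_mx (0 : 'cV[R]_n) L)^T = G).
by rewrite tr_row_mx mul_row_col mul0mx add0r GL.
Qed.

Lemma inv_gram_sym : K^T = K.
Proof. by case: GH_W => GT _ _; rewrite trmx_inv GT. Qed.

Lemma inv_gram_posdef : posdef K.
Proof.
have Ku : K \in unitmx by rewrite unitmx_inv.
have := posdef_conj G_posdef Ku; rewrite inv_gram_sym.
by rewrite -mulmxA GK mulmx1.
Qed.

Lemma vertex_scale_gt0 p : 0 < d 0 p.
Proof. by rewrite mxE sqrtr_gt0 invr_gt0; apply/posdef_diag_gt0/inv_gram_posdef. Qed.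

Lemma wing_quad_gt0 p : 0 < (H *m K *m H^T) p p.
Proof.
have Hp0 : row p H != 0.
  by case: GH_W => _ _ Hd; apply/eqP => /rowP /(_ p); rewrite !mxE Hd => /eqP; rewrite oner_eq0.
by rewrite mulmx_row_entry row_mul mulmx_tr_row_entry; apply: inv_gram_posdef.
Qed.

Lemma wing_scale_gt0 p : 0 < beta 0 p.
Proof. by rewrite mxE sqrtr_gt0 invr_gt0 wing_quad_gt0. Qed.

Lemma vertex_scale_unit : diag_mx d \in unitmx.
Proof. by apply: diag_mx_unit => p; rewrite gt_eqF ?vertex_scale_gt0. Qed.

Lemma vertices_dot_normals : A *m N^T = diag_mx d.
Proof. by rewrite -mulmxA normals_gram -mulmxA KG mulmx1. Qed.

Lemma wings_dot_normals : Z *m N^T = diag_mx beta *m H.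
Proof. by rewrite -mulmxA normals_gram -mulmxA KG mulmx1. Qed.

Let di := \row_p (d 0 p)^-1.

Lemma vertex_scale_inv : diag_mx di *m diag_mx d = 1%:M.
Proof.
by rewrite -invmx_diag ?mulVmx ?vertex_scale_unit // => p; rewrite gt_eqF ?vertex_scale_gt0.
Qed.

Lemma normals_from_vertices : N = G *m diag_mx di *m A.
Proof.
by rewrite /A -!mulmxA (mulmxA (diag_mx di)) vertex_scale_inv mul1mx mulmxA GK mul1mx.
Qed.

Lemma wings_from_vertices : Z = diag_mx beta *m H *m diag_mx di *m A.
Proof. by rewrite /A /Z -!mulmxA (mulmxA (diag_mx di)) vertex_scale_inv mul1mx. Qed.

Lemma vertex_rows_gram : A *m A^T = diag_mx d *m K *m diag_mx d.
Proof.
have AT : A^T = N^T *m K *m diag_mx d by rewrite /A !trmx_mul tr_diag_mx inv_gram_sym mulmxA.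
by rewrite AT !mulmxA vertices_dot_normals.
Qed.

Lemma wing_rows_gram : Z *m Z^T = diag_mx beta *m (H *m K *m H^T) *m diag_mx beta.
Proof.
have BT : Z^T = N^T *m K *m H^T *m diag_mx beta.
  by rewrite /Z !trmx_mul tr_diag_mx inv_gram_sym !mulmxA.
by rewrite BT !mulmxA wings_dot_normals.
Qed.

Let a p := row p A.
Let b p := row p Z.
Let nv p := row p N.

Lemma construction_butterfly : is_butterfly a b.
Proof.
have [_ _ Hd] := GH_W.
split.
- move=> p; rewrite /on_sphere dotv_row_row vertex_rows_gram diag_mulmx_diagE mxE.
  by rewrite sqrtrV_sandwich //; apply/posdef_diag_gt0/inv_gram_posdef.
- move=> p; rewrite /on_sphere dotv_row_row wing_rows_gram diag_mulmx_diagE mxE.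
  by rewrite sqrtrV_sandwich ?wing_quad_gt0.
- rewrite /a rows_mx_row; apply: (@row_free_mul_unit _ _ _ _ N^T).
  by rewrite vertices_dot_normals vertex_scale_unit.
- move=> p; apply: (@row_free_mul_unit _ _ _ _ N^T); rewrite -row_free_unit.
  apply: (@row_free_diag_off_row _ _ _ (fun i => d 0 i) p).
  + move=> i j ip; rewrite -dotv_row_row row_rows_mx /wing (negbTE ip).
    by rewrite dotv_row_row vertices_dot_normals mxE.
  + by move=> i _; rewrite gt_eqF ?vertex_scale_gt0.
  + rewrite -dotv_row_row row_rows_mx /wing eqxx dotv_row_row wings_dot_normals.
    by rewrite mul_diag_mx mxE Hd mulr1 gt_eqF ?wing_scale_gt0.
Qed.

Lemma construction_pair : butterfly_pair a b G H.
Proof.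
have [_ Gd Hd] := GH_W.
have rowsA : rows_mx a = A by exact: rows_mx_row.
have nv_a p q : dotv (nv p) (a q) = d 0 q *+ (q == p).
  by rewrite dotvC dotv_row_row vertices_dot_normals mxE.
have b_nv p q : dotv (b p) (nv q) = beta 0 p * H p q.
  by rewrite dotv_row_row wings_dot_normals mul_diag_mx mxE.
have nv_nv p : dotv (nv p) (nv p) = 1 by rewrite dotv_row_row normals_gram Gd.
exists nv, b, (fun p => beta 0 p); split.
- move=> p; split.
  + by rewrite /nv normals_from_vertices -rowsA; apply: in_span_rows.
  + exact: nv_nv.
  + by move=> q qp; rewrite nv_a (negbTE qp).
  + by rewrite nv_a eqxx vertex_scale_gt0.
- move=> p; exists (b p - beta 0 p *: nv p); rewrite subKr; split.
  + have -> : b p - beta 0 p *: nv p =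
        row p (diag_mx beta *m (H - G) *m diag_mx di *m rows_mx a).
      rewrite rowsA mulmxBr mulmxBl mulmxBl -wings_from_vertices.
      have -> : diag_mx beta *m G *m diag_mx di *m A = diag_mx beta *m N.
        by rewrite normals_from_vertices !mulmxA.
      rewrite linearB /=; congr (_ - _).
      by apply/rowP => j; rewrite mul_diag_mx !mxE.
    by apply: in_span_rows_off; rewrite diag_mulmx_diagE !mxE Gd Hd subrr mulr0 mul0r.
  + by move=> q qp; rewrite dotvZl nv_a (negbTE qp) mulr0n mulr0.
  + rewrite dotvZl dotvZr nv_nv mulr1 -expr2 sqrtr_sqr gtr0_norm //.
    exact: wing_scale_gt0.
- move=> p; exists 1%:M; split.
  + by rewrite trmx1 mulmx1.
  + exact: det1.
  + by move=> q _; rewrite mulmx1.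
  + by rewrite mulmx1.
  + split; last by rewrite b_nv Hd mulr1 wing_scale_gt0.
    by rewrite /b wings_from_vertices -rowsA; apply: in_span_rows.
- by apply/matrixP => p q; rewrite mxE dotv_row_row normals_gram.
- apply/matrixP => p q; rewrite mxE b_nv mulrA mulVf ?mul1r //.
  by rewrite gt_eqF ?wing_scale_gt0.
Qed.

End Construction.

Lemma posdef_rev_reach (R : realType) n (x y : 'M[R]_n * 'M[R]_n) :
  rev_reach x y -> posdef x.1 -> posdef y.1.
Proof.
move=> r Gpd; elim: r => [//|p [G H] _ IH|p [G H] _ IH //].
by rewrite a_rev_G -{2}tr_refl_mx; apply: posdef_conj IH (refl_mx_unit R p).
Qed.

Lemma posdef_in_Psi (R : realType) n (G H : 'M[R]_n) : in_W G H -> posdef G -> in_Psi G H.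
Proof.
move=> W Gpd; have [GT _ _] := W; have [L GL] := cholesky GT Gpd.
have ab := construction_butterfly W Gpd GL; have P := construction_pair W Gpd GL.
by do 2 eexists; exists G, H; split; [exact: ab | exact: P | exact: rev_refl].
Qed.

Theorem mainTheorem12 (R : realType) (n : nat) (hn : (2 <= n)%N) :
  (forall G H : 'M[R]_n, in_W G H -> (in_Psi G H <-> posdef G)) /\
  (forall (G H : 'M[R]_n) (a b a' b' : 'I_n -> 'rV[R]_(n.+1)),
     is_butterfly a b -> is_butterfly a' b' ->
     (exists G0 H0, butterfly_pair a b G0 H0 /\ rev_reach (G0, H0) (G, H)) ->
     (exists G1 H1, butterfly_pair a' b' G1 H1 /\ rev_reach (G1, H1) (G, H)) ->
     exists ea eb : 'I_n -> bool,
       bf_isometric (antipodize a ea) (antipodize b eb) a' b').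
Proof.
split=> [G H W|G H a b a' b' ab a'b' [G0 [H0 [P0 r0]]] [G1 [H1 [P1 r1]]]].
- split=> [[a [b [G0 [H0 [ab P0 r0]]]]]|]; last exact: posdef_in_Psi.
  exact: posdef_rev_reach r0 (butterfly_pair_realizes ab P0).2.
- have [ea [eb real]] := realizes_rev_reach r0 (butterfly_pair_realizes ab P0).1.
  have [ea' [eb' real']] := realizes_rev_reach r1 (butterfly_pair_realizes a'b' P1).1.
  by do 2 eexists; apply: realizes_pair_isometric real real'.
Qed.
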